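(* Consider the stationary M/M/1/K queue with arrival rate $\lambda>0$, service rate $\mu>0$, $\rho=\lambda/\mu$, capacity $K\ge1$, queue length process $\{Q(t)\}$ and departure process $\{D(t)\}$. Then $$\lim_{t\to\infty}\mathrm{Cov}\big(D(t),Q(t)\big)=\begin{cases}\rho^{K+1}\dfrac{K^2(\rho-1)^2(1+3\rho^{K+1})-2\rho(\rho^K-1)(-2+\rho+\rho^{K+2})+K(\rho-1)(-1+3\rho-7\rho^{K+1}+5\rho^{K+2})}{2(\rho-1)^2(\rho^{K+1}-1)^3}, & \rho\neq1,\\[1em] -\dfrac{K(K+2)}{24}, & \rho=1.\end{cases}$$
   Context: The M/M/1/K queue: a single server, Poisson arrivals at rate $\lambda$, exponential service with rate $\mu$, and at most $K$ customers in the system (arrivals finding $K$ customers are lost). $Q(t)\in\{0,\dots,K\}$ is the number in system, a birth–death chain with up-rate $\lambda$ and down-rate $\mu$; ''stationary'' means $Q(0)$ has the stationary distribution $\pi_i=\frac{1-\rho}{1-\rho^{K+1}}\rho^i$ ($\rho\ne1$), $\pi_i=\frac1{K+1}$ ($\rho=1$). $D(t)$ is the number of service completions in $[0,t]$. *)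

From Stdlib Require Import Reals Lra Lia Arith ClassicalEpsilon.
Open Scope R_scope.

(** Value of a real series (sum_{n>=0} u n).  Chosen by Hilbert's epsilon
    among the limits of the partial sums; all series used below converge. *)
Definition series_value (u : nat -> R) : R :=
  epsilon (inhabits 0%R) (fun l => infinite_sum u l).

Definition pi_stat (rho : R) (K i : nat) : R :=
  if (K <? i)%nat then 0 else
  if Req_EM_T rho 1 then / INR (S K)
  else (1 - rho) / (1 - rho ^ (S K)) * rho ^ i.

(** Construction of the joint process (D(t), Q(t)) by uniformisation:
    events occur at the jumps of a Poisson process of rate lam+mu; each event
    is an arrival with prob. lam/(lam+mu) (lost if Q = K) or a potential
    service with prob. mu/(lam+mu) (a departure iff Q > 0).
    [unif lam mu K n d i] = P(D = d, Q = i after n events), with Q(0) ~ pi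
    and D(0) = 0. *)
Fixpoint unif (lam mu : R) (K n : nat) : nat -> nat -> R :=
  let a := lam / (lam + mu) in
  let b := mu / (lam + mu) in
  match n with
  | O => fun d i => if (d =? 0)%nat then pi_stat (lam / mu) K i else 0
  | S n' => fun d i =>
      let p := unif lam mu K n' in
      if (K <? i)%nat then 0 else
        (if (i =? 0)%nat then 0 else a * p d (i - 1)%nat)   (* arrival  *)
      + (if (i =? K)%nat then a * p d K else 0)             (* lost arrival *)
      + (if (i =? 0)%nat then b * p d 0%nat else 0)         (* idle server *)
      + (match d with
         | O => 0
         | S d' => if (i <? K)%nat then b * p d' (S i) else 0
         end)                                               (* departure *)
  end.

Definition joint_pmf (lam mu : R) (K : nat) (t : R) (d i : nat) : R :=
  series_value (fun n =>
    exp (- ((lam + mu) * t)) * ((lam + mu) * t) ^ n / INR (fact n)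
    * unif lam mu K n d i).

Definition E_DQ (lam mu : R) (K : nat) (t : R) : R :=
  series_value (fun d =>
    sum_f_R0 (fun i => INR d * INR i * joint_pmf lam mu K t d i) K).

Definition E_D (lam mu : R) (K : nat) (t : R) : R :=
  series_value (fun d =>
    sum_f_R0 (fun i => INR d * joint_pmf lam mu K t d i) K).

Definition E_Q (lam mu : R) (K : nat) (t : R) : R :=
  sum_f_R0 (fun i => INR i * series_value (fun d => joint_pmf lam mu K t d i)) K.

Definition cov_DQ (lam mu : R) (K : nat) (t : R) : R :=
  E_DQ lam mu K t - E_D lam mu K t * E_Q lam mu K t.

Definition tends_at_infty (f : R -> R) (L : R) : Prop :=
  forall eps, eps > 0 -> exists T, forall t, T <= t -> Rabs (f t - L) < eps.

Definition cov_limit (rho : R) (K : nat) : R :=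
  let k := INR K in
  if Req_EM_T rho 1 then - (k * (k + 2)) / 24
  else rho ^ (S K) *
    ( k ^ 2 * (rho - 1) ^ 2 * (1 + 3 * rho ^ (S K))
      - 2 * rho * (rho ^ K - 1) * (-2 + rho + rho ^ (K + 2))
      + k * (rho - 1) * (-1 + 3 * rho - 7 * rho ^ (S K) + 5 * rho ^ (K + 2)) )
    / (2 * (rho - 1) ^ 2 * (rho ^ (S K) - 1) ^ 3).

(* 1. The embedded chain.  One event acts on measures on {0..K} by the forward operator
      fwd (split into the moves without and with a departure).  It is l1-contracting and,
      by a Doeblin minorisation (K services empty the queue), its iterates of any
      mass-zero measure vanish geometrically.  The geometric law pi is invariant, and the
      Poisson equation  P g = g - y  for the centred observable y i = i - E_pi[Q] has an
      explicit solution g.  Hence for every orbit of  w_(n+1) = fwd w_n + r,  w_0 = 0,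
      the pairing <w_n, y> converges to <r, g> - (mass r) <pi, g>.
   2. The moments m_n(i) = E[D_n ; Q_n = i] after n events form such an orbit with r the
      departure flux of pi, so c_n = <m_n, y> = Cov(D_n, Q_n) converges; summation by
      parts and power-sum identities turn the limit into the closed form cov_limit.
   3. Cov(D(t), Q(t)) is the Poisson((lam+mu)t)-average of the c_n (Tonelli for the
      underlying double series), and Poisson averages of a convergent sequence converge
      to the same limit as the mean tends to infinity. *)

From Stdlib Require Import Reals Lra Lia Arith ClassicalEpsilon.
Open Scope R_scope.

Lemma infinite_sum_Un_cv u l : infinite_sum u l <-> Un_cv (sum_f_R0 u) l.
Proof. unfold infinite_sum, Un_cv, Rdist, R_dist. tauto. Qed.

Lemma series_value_eq u l : infinite_sum u l -> series_value u = l.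
Proof.
  intro H. unfold series_value.
  apply (uniqueness_sum u); [apply epsilon_spec; now exists l | exact H].
Qed.

Lemma Un_cv_const (c : R) : Un_cv (fun _ => c) c.
Proof. intros e He. exists O. intros. unfold Rdist. rewrite Rminus_diag, Rabs_R0. lra. Qed.

Lemma Un_cv_abs_le u l B : Un_cv u l -> (forall n, Rabs (u n) <= B) -> Rabs l <= B.
Proof.
  intros Hu HB. exact (Rle_cv_lim HB (cv_cvabs u l Hu) (Un_cv_const B)).
Qed.

Lemma sum_scal_l (c : R) f N : sum_f_R0 (fun i => c * f i) N = c * sum_f_R0 f N.
Proof. rewrite scal_sum. apply sum_eq. intros; ring. Qed.

Lemma infinite_sum_ext u v l :
  (forall n, u n = v n) -> infinite_sum u l -> infinite_sum v l.
Proof.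
  rewrite !infinite_sum_Un_cv. intros He H. apply Un_cv_ext with (sum_f_R0 u); auto.
  intro n. apply sum_eq. auto.
Qed.

Lemma infinite_sum_scal u l c :
  infinite_sum u l -> infinite_sum (fun n => c * u n) (c * l).
Proof.
  rewrite !infinite_sum_Un_cv. intro H.
  apply Un_cv_ext with (fun N => c * sum_f_R0 u N).
  - intro n. symmetry. apply sum_scal_l.
  - exact (CV_mult _ _ _ _ (Un_cv_const c) H).
Qed.

Lemma infinite_sum_plus u v l1 l2 : infinite_sum u l1 -> infinite_sum v l2 ->
  infinite_sum (fun n => u n + v n) (l1 + l2).
Proof.
  rewrite !infinite_sum_Un_cv. intros H1 H2.
  apply Un_cv_ext with (fun N => sum_f_R0 u N + sum_f_R0 v N).
  - intro n. symmetry. apply sum_plus.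
  - now apply CV_plus.
Qed.

Lemma infinite_sum_minus u v l1 l2 : infinite_sum u l1 -> infinite_sum v l2 ->
  infinite_sum (fun n => u n - v n) (l1 - l2).
Proof.
  rewrite !infinite_sum_Un_cv. intros H1 H2.
  apply Un_cv_ext with (fun N => sum_f_R0 u N - sum_f_R0 v N).
  - intro n. symmetry. apply minus_sum.
  - now apply CV_minus.
Qed.

Lemma infinite_sum_finsum (F : nat -> nat -> R) (l : nat -> R) K :
  (forall i, (i <= K)%nat -> infinite_sum (fun n => F n i) (l i)) ->
  infinite_sum (fun n => sum_f_R0 (F n) K) (sum_f_R0 l K).
Proof.
  induction K as [|K IH]; intro H; simpl.
  - apply H; lia.
  - apply infinite_sum_plus; [apply IH; intros; apply H|apply H]; lia.
Qed.

Lemma infinite_sum_comparison u v lv :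
  (forall n, 0 <= u n <= v n) -> infinite_sum v lv -> exists l, infinite_sum u l.
Proof.
  intros H Hv. destruct (Rseries_CV_comp u v H) as [l Hl].
  - exists lv. now apply infinite_sum_Un_cv.
  - exists l. now apply infinite_sum_Un_cv.
Qed.

Lemma sum_nonneg f N :
  (forall i, (i <= N)%nat -> 0 <= f i) -> 0 <= sum_f_R0 f N.
Proof.
  intro H. induction N; simpl; [apply H; lia|].
  assert (0 <= f (S N)) by (apply H; lia).
  assert (0 <= sum_f_R0 f N) by (apply IHN; intros; apply H; lia). lra.
Qed.

Lemma sum_prefix_le f m m' :
  (forall i, 0 <= f i) -> (m <= m')%nat -> sum_f_R0 f m <= sum_f_R0 f m'.
Proof.
  intros Hf Hm. induction Hm; simpl; [lra|]. specialize (Hf (S m0)). lra.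
Qed.

Lemma term_le_sum f N i :
  (forall j, 0 <= f j) -> (i <= N)%nat -> f i <= sum_f_R0 f N.
Proof.
  intros Hf Hi. apply Rle_trans with (sum_f_R0 f i).
  - destruct i; simpl; [lra|]. pose proof (sum_nonneg f i ltac:(auto)). lra.
  - now apply sum_prefix_le.
Qed.

Lemma sum_zero_tail f n D : (n <= D)%nat -> (forall d, (n < d)%nat -> f d = 0) ->
  sum_f_R0 f D = sum_f_R0 f n.
Proof.
  intros Hn Hz. induction Hn; [reflexivity|]. simpl. rewrite IHHn, Hz by lia. ring.
Qed.

Lemma sum_swap (a : nat -> nat -> R) N D :
  sum_f_R0 (fun n => sum_f_R0 (a n) D) N = sum_f_R0 (fun d => sum_f_R0 (fun n => a n d) N) D.
Proof.
  induction N as [|N IH]; simpl; [reflexivity|]. rewrite IH, <- sum_plus. reflexivity.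
Qed.

Lemma tonelli_triangular (a : nat -> nat -> R) (A : nat -> R) Sv :
  (forall n d, 0 <= a n d) -> (forall n d, (n < d)%nat -> a n d = 0) ->
  (forall d, infinite_sum (fun n => a n d) (A d)) ->
  infinite_sum (fun n => sum_f_R0 (a n) n) Sv ->
  infinite_sum A Sv.
Proof.
  intros Hpos Hz HA HS.
  assert (Hrow : forall n D, sum_f_R0 (a n) D <= sum_f_R0 (a n) n).
  { intros n D. destruct (le_lt_dec D n).
    - now apply sum_prefix_le.
    - rewrite (sum_zero_tail _ n D) by (auto; lia). lra. }
  assert (HP : forall D, Un_cv (sum_f_R0 (fun n => sum_f_R0 (a n) D)) (sum_f_R0 A D)).
  { intro D. apply infinite_sum_Un_cv, infinite_sum_finsum. intros; apply HA. }
  assert (HPpos : forall n D, 0 <= sum_f_R0 (a n) D) by (intros; now apply sum_nonneg).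
  assert (Hup : forall D, sum_f_R0 A D <= Sv).
  { intro D. refine (Rle_cv_lim _ (HP D) (Un_cv_const Sv)).
    intro N. eapply Rle_trans; [apply sum_Rle; intros; apply Hrow|].
    apply sum_incr; auto. }
  assert (Hlow : forall D, sum_f_R0 (fun n => sum_f_R0 (a n) n) D <= sum_f_R0 A D).
  { intro D. rewrite (sum_eq _ (fun n => sum_f_R0 (a n) D) D).
    - apply sum_incr; auto.
    - intros n Hn. symmetry. apply sum_zero_tail; auto. }
  apply infinite_sum_Un_cv. intros e He.
  destruct (proj1 (infinite_sum_Un_cv _ _) HS e He) as [N HN].
  exists N. intros D HD. specialize (HN D HD). specialize (Hup D). specialize (Hlow D).
  unfold Rdist in *. apply Rabs_def2 in HN. apply Rabs_def1; lra.
Qed.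

(* Measures on {0..K} and test functions are sequences nat -> R read on {0..K}. *)
Definition dot (K : nat) (v w : nat -> R) : R := sum_f_R0 (fun i => v i * w i) K.
Definition mass (K : nat) (v : nat -> R) : R := sum_f_R0 v K.
Definition l1norm (K : nat) (v : nat -> R) : R := sum_f_R0 (fun i => Rabs (v i)) K.

Lemma dot_ext K v v' w w' : (forall i, (i <= K)%nat -> v i = v' i) ->
  (forall i, (i <= K)%nat -> w i = w' i) -> dot K v w = dot K v' w'.
Proof. intros Hv Hw. unfold dot. apply sum_eq. intros. now rewrite Hv, Hw. Qed.

(* |<v, w>| <= |v|_1 |w|_1 (the sup norm of w is bounded by its l1 norm). *)
Lemma dot_bound K v w : Rabs (dot K v w) <= l1norm K v * l1norm K w.
Proof.
  unfold dot. eapply Rle_trans; [apply sum_f_R0_triangle|].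
  unfold l1norm. rewrite (Rmult_comm (sum_f_R0 _ K)), scal_sum.
  apply sum_Rle. intros i Hi. rewrite Rabs_mult. apply Rmult_le_compat_l; [apply Rabs_pos|].
  apply (term_le_sum (fun i => Rabs (w i))); auto. intro; apply Rabs_pos.
Qed.

Section ForwardOperator.
Variables a b : R.

(* One event of the uniformised chain acting on a signed measure v on {0..K}: an
   arrival with probability a (lost at K) or a service with probability b (wasted at 0).
   fwd_keep collects the moves without a departure, fwd_depart the departures. *)
Definition fwd_keep (K : nat) (v : nat -> R) (i : nat) : R :=
  if (K <? i)%nat then 0 else
    (if (i =? 0)%nat then 0 else a * v (i - 1)%nat)
  + (if (i =? K)%nat then a * v K else 0)
  + (if (i =? 0)%nat then b * v 0%nat else 0).

Definition fwd_depart (K : nat) (v : nat -> R) (i : nat) : R :=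
  if (K <? i)%nat then 0 else if (i <? K)%nat then b * v (S i) else 0.

Definition fwd (K : nat) (v : nat -> R) (i : nat) : R := fwd_keep K v i + fwd_depart K v i.

Definition fwd_iter (K n : nat) (v : nat -> R) : nat -> R := Nat.iter n (fwd K) v.

(* The backward operator: (bwd g) i is the mean of g after one event from state i. *)
Definition bwd (K : nat) (g : nat -> R) (i : nat) : R :=
  a * g (Nat.min (S i) K) + b * g (pred i).

Lemma fwd_keep_sum K (u : nat -> nat -> R) N i :
  sum_f_R0 (fun d => fwd_keep K (u d) i) N
  = fwd_keep K (fun j => sum_f_R0 (fun d => u d j) N) i.
Proof.
  induction N as [|N IH]; simpl; [reflexivity|]. rewrite IH. unfold fwd_keep.
  destruct (K <? i)%nat, (i =? 0)%nat, (i =? K)%nat; ring.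
Qed.

Lemma fwd_depart_sum K (u : nat -> nat -> R) N i :
  sum_f_R0 (fun d => fwd_depart K (u d) i) N
  = fwd_depart K (fun j => sum_f_R0 (fun d => u d j) N) i.
Proof.
  induction N as [|N IH]; simpl; [reflexivity|]. rewrite IH. unfold fwd_depart.
  destruct (K <? i)%nat, (i <? K)%nat; ring.
Qed.

Lemma fwd_lin K x y v w i :
  fwd K (fun j => x * v j + y * w j) i = x * fwd K v i + y * fwd K w i.
Proof.
  unfold fwd, fwd_keep, fwd_depart.
  destruct (K <? i)%nat, (i =? 0)%nat, (i =? K)%nat, (i <? K)%nat; ring.
Qed.

Lemma fwd_scal K c v i : fwd K (fun j => c * v j) i = c * fwd K v i.
Proof.
  unfold fwd, fwd_keep, fwd_depart.
  destruct (K <? i)%nat, (i =? 0)%nat, (i =? K)%nat, (i <? K)%nat; ring.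
Qed.

Lemma fwd_ext K v w i :
  (forall j, (j <= K)%nat -> v j = w j) -> fwd K v i = fwd K w i.
Proof.
  intro H. unfold fwd, fwd_keep, fwd_depart. destruct (K <? i)%nat eqn:E; [ring|].
  apply Nat.ltb_ge in E. rewrite !H by lia.
  destruct (i <? K)%nat eqn:E2; [|ring]. apply Nat.ltb_lt in E2. rewrite H by lia. ring.
Qed.

Hypotheses (Ha : 0 <= a) (Hb : 0 <= b) (Hab : a + b = 1).

Lemma fwd_mono K v w i :
  (forall j, (j <= K)%nat -> v j <= w j) -> fwd K v i <= fwd K w i.
Proof.
  intro H. unfold fwd, fwd_keep, fwd_depart. destruct (K <? i)%nat eqn:E; [lra|].
  apply Nat.ltb_ge in E.
  assert (v (i - 1)%nat <= w (i - 1)%nat) by (apply H; lia).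
  assert (v K <= w K) by (apply H; lia).
  assert (v 0%nat <= w 0%nat) by (apply H; lia).
  assert (Hdep : (if (i <? K)%nat then b * v (S i) else 0)
                 <= (if (i <? K)%nat then b * w (S i) else 0)).
  { destruct (i <? K)%nat eqn:E2; [|lra]. apply Nat.ltb_lt in E2.
    apply Rmult_le_compat_l; [exact Hb|apply H; lia]. }
  destruct (i =? 0)%nat, (i =? K)%nat; nra.
Qed.

Lemma fwd_nonneg K v i :
  (forall j, (j <= K)%nat -> 0 <= v j) -> 0 <= fwd K v i.
Proof.
  intro H. replace 0 with (fwd K (fun _ => 0) i).
  - now apply fwd_mono.
  - unfold fwd, fwd_keep, fwd_depart.
    destruct (K <? i)%nat, (i =? 0)%nat, (i =? K)%nat, (i <? K)%nat; ring.
Qed.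

Lemma fwd_abs K v i : Rabs (fwd K v i) <= fwd K (fun j => Rabs (v j)) i.
Proof.
  apply Rabs_le. split.
  - replace (- fwd K (fun j => Rabs (v j)) i) with (fwd K (fun j => -1 * Rabs (v j) + 0 * v j) i)
      by (rewrite fwd_lin; ring).
    apply fwd_mono. intros j _. pose proof (Rle_abs (- v j)). rewrite Rabs_Ropp in *. lra.
  - apply fwd_mono. intros j _. apply Rle_abs.
Qed.

Lemma dot_fwd k v g : dot (S k) (fwd (S k) v) g = dot (S k) v (bwd (S k) g).
Proof.
  unfold dot, fwd, fwd_keep, fwd_depart, bwd.
  rewrite (sum_eq _ (fun i => (if (i =? 0)%nat then 0 else a * v (i - 1)%nat * g i)
     + (if (i =? S k)%nat then a * v (S k) * g i else 0)
     + (if (i =? 0)%nat then b * v 0%nat * g i else 0)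
     + (if (i <? S k)%nat then b * v (S i) * g i else 0))).
  2:{ intros i Hi. rewrite (proj2 (Nat.ltb_ge (S k) i)) by lia.
      destruct (i =? 0)%nat, (i =? S k)%nat, (i <? S k)%nat; ring. }
  rewrite (sum_eq (fun i => v i * _)
             (fun i => a * v i * g (Nat.min (S i) (S k)) + b * v i * g (pred i)))
    by (intros; ring).
  rewrite !sum_plus.
  assert (Earr : sum_f_R0 (fun i => if (i =? 0)%nat then 0 else a * v (i - 1)%nat * g i) (S k)
                 = sum_f_R0 (fun i => a * v i * g (S i)) k).
  { rewrite decomp_sum by lia. simpl. rewrite Rplus_0_l.
    apply sum_eq. intros i _. now rewrite Nat.sub_0_r. }
  assert (Elost : sum_f_R0 (fun i => if (i =? S k)%nat then a * v (S k) * g i else 0) (S k)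
                  = a * v (S k) * g (S k)).
  { rewrite tech5, Nat.eqb_refl, sum_eq_R0; [ring|].
    intros i Hi. now rewrite (proj2 (Nat.eqb_neq i (S k))) by lia. }
  assert (Eidle : sum_f_R0 (fun i => if (i =? 0)%nat then b * v 0%nat * g i else 0) (S k)
                  = b * v 0%nat * g 0%nat).
  { rewrite decomp_sum by lia. simpl. rewrite sum_eq_R0; [ring|]. reflexivity. }
  assert (Edep : sum_f_R0 (fun i => if (i <? S k)%nat then b * v (S i) * g i else 0) (S k)
                 = sum_f_R0 (fun i => b * v (S i) * g i) k).
  { rewrite tech5, Nat.ltb_irrefl, Rplus_0_r.
    apply sum_eq. intros i Hi. now rewrite (proj2 (Nat.ltb_lt i (S k))) by lia. }
  assert (Eup : sum_f_R0 (fun i => a * v i * g (Nat.min (S i) (S k))) (S k)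
                = sum_f_R0 (fun i => a * v i * g (S i)) k + a * v (S k) * g (S k)).
  { rewrite tech5, Nat.min_r by lia. f_equal.
    apply sum_eq. intros i Hi. now rewrite Nat.min_l by lia. }
  assert (Edown : sum_f_R0 (fun i => b * v i * g (pred i)) (S k)
                  = b * v 0%nat * g 0%nat + sum_f_R0 (fun i => b * v (S i) * g i) k).
  { rewrite decomp_sum by lia. reflexivity. }
  rewrite Earr, Elost, Eidle, Edep, Eup, Edown. ring.
Qed.

Lemma bwd_const K c i : bwd K (fun _ => c) i = c.
Proof. unfold bwd. rewrite <- Rmult_plus_distr_r, Hab. ring. Qed.

Lemma mass_fwd k v : mass (S k) (fwd (S k) v) = mass (S k) v.
Proof.
  transitivity (dot (S k) (fwd (S k) v) (fun _ => 1)).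
  - unfold mass, dot. apply sum_eq; intros; ring.
  - rewrite dot_fwd. unfold mass, dot. apply sum_eq; intros. rewrite bwd_const; ring.
Qed.

Lemma l1norm_fwd k v : l1norm (S k) (fwd (S k) v) <= l1norm (S k) v.
Proof.
  unfold l1norm.
  apply Rle_trans with (mass (S k) (fwd (S k) (fun j => Rabs (v j)))).
  - apply sum_Rle. intros. apply fwd_abs.
  - rewrite mass_fwd. unfold mass. lra.
Qed.

Lemma fwd_iter_S K n v : fwd_iter K (S n) v = fwd K (fwd_iter K n v).
Proof. reflexivity. Qed.

Lemma fwd_iter_add K m n v : fwd_iter K (m + n) v = fwd_iter K m (fwd_iter K n v).
Proof. apply Nat.iter_add. Qed.

Lemma fwd_iter_ext K n v w i : (forall j, (j <= K)%nat -> v j = w j) -> (i <= K)%nat ->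
  fwd_iter K n v i = fwd_iter K n w i.
Proof.
  intro H. revert i. induction n; intros i Hi; [now apply H|].
  rewrite !fwd_iter_S. apply fwd_ext. auto.
Qed.

Lemma fwd_iter_lin K n x y v w i :
  fwd_iter K n (fun j => x * v j + y * w j) i = x * fwd_iter K n v i + y * fwd_iter K n w i.
Proof.
  revert i. induction n; intro i; [reflexivity|].
  rewrite !fwd_iter_S, <- fwd_lin. apply fwd_ext. auto.
Qed.

Lemma fwd_iter_nonneg K n v i :
  (forall j, (j <= K)%nat -> 0 <= v j) -> (i <= K)%nat -> 0 <= fwd_iter K n v i.
Proof.
  intros Hv. revert i. induction n; intros i Hi; [now apply Hv|].
  rewrite fwd_iter_S. now apply fwd_nonneg.
Qed.

Lemma mass_fwd_iter k n v : mass (S k) (fwd_iter (S k) n v) = mass (S k) v.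
Proof.
  induction n; [reflexivity|]. now rewrite fwd_iter_S, mass_fwd.
Qed.

Lemma l1norm_fwd_iter_mono k m n v :
  l1norm (S k) (fwd_iter (S k) (m + n) v) <= l1norm (S k) (fwd_iter (S k) n v).
Proof.
  induction m; simpl; [lra|]. eapply Rle_trans; [apply l1norm_fwd|exact IHm].
Qed.

(* Minorisation: K consecutive services (each of probability b) move all the mass of a
   nonnegative measure to state 0.  [shift K v] is the image of v under a sure service. *)
Definition shift (K : nat) (v : nat -> R) (i : nat) : R :=
  if (i =? 0)%nat then v 0%nat + v 1%nat else if (i <? K)%nat then v (S i) else 0.

Lemma shift_nonneg K v i : (1 <= K)%nat ->
  (forall j, (j <= K)%nat -> 0 <= v j) -> 0 <= shift K v i.
Proof.
  intros HK Hv. unfold shift. destruct (i =? 0)%nat.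
  - assert (0 <= v 0%nat) by (apply Hv; lia). assert (0 <= v 1%nat) by (apply Hv; lia). lra.
  - destruct (i <? K)%nat eqn:E; [apply Hv; apply Nat.ltb_lt in E; lia|lra].
Qed.

Lemma fwd_ge_shift K v i : (1 <= K)%nat ->
  (forall j, (j <= K)%nat -> 0 <= v j) -> (i <= K)%nat -> b * shift K v i <= fwd K v i.
Proof.
  intros HK Hv Hi. unfold fwd, fwd_keep, fwd_depart, shift.
  rewrite (proj2 (Nat.ltb_ge K i)) by lia.
  assert (0 <= v (i - 1)%nat) by (apply Hv; lia). assert (0 <= v K) by (apply Hv; lia).
  destruct i as [|j].
  - rewrite (proj2 (Nat.eqb_neq 0 K)), (proj2 (Nat.ltb_lt 0 K)) by lia. simpl.
    assert (0 <= v 0%nat) by (apply Hv; lia). nra.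
  - change (S j =? 0)%nat with false. destruct (S j <? K)%nat eqn:E.
    + assert (0 <= v (S (S j))) by (apply Hv; apply Nat.ltb_lt in E; lia).
      destruct (S j =? K)%nat; nra.
    + destruct (S j =? K)%nat; nra.
Qed.

Lemma fwd_iter_ge_shift K n v i : (1 <= K)%nat ->
  (forall j, (j <= K)%nat -> 0 <= v j) -> (i <= K)%nat ->
  b ^ n * Nat.iter n (shift K) v i <= fwd_iter K n v i.
Proof.
  intros HK Hv.
  assert (Hsh : forall n j, (j <= K)%nat -> 0 <= Nat.iter n (shift K) v j).
  { intro m. induction m as [|m IH]; intros j Hj; [now apply Hv|]. simpl. now apply shift_nonneg. }
  revert i. induction n; intros i Hi; simpl; [lra|].
  apply Rle_trans with (fwd K (fun j => b ^ n * Nat.iter n (shift K) v j) i).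
  - rewrite fwd_scal, (Rmult_comm b), Rmult_assoc. apply Rmult_le_compat_l; [now apply pow_le|].
    apply fwd_ge_shift; auto.
  - apply fwd_mono; auto.
Qed.

Lemma shift_iter_values K n v : (n <= K)%nat ->
  Nat.iter n (shift K) v 0%nat = sum_f_R0 v n /\
  (forall i, (1 <= i)%nat -> (i + n <= K)%nat -> Nat.iter n (shift K) v i = v (i + n)%nat).
Proof.
  induction n as [|n IH]; intro Hn.
  - split; [reflexivity|]. intros. simpl. now rewrite Nat.add_0_r.
  - destruct IH as [H0 H1]; [lia|]. split.
    + simpl. unfold shift at 1. simpl. rewrite H0, H1 by lia. reflexivity.
    + intros i Hi Hin. simpl. unfold shift at 1. destruct i as [|i]; [lia|].
      change (S i =? 0)%nat with false. rewrite (proj2 (Nat.ltb_lt (S i) K)) by lia.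
      rewrite H1 by lia. f_equal. lia.
Qed.

Lemma minorization K v : (1 <= K)%nat -> (forall j, (j <= K)%nat -> 0 <= v j) ->
  b ^ K * mass K v <= fwd_iter K K v 0%nat.
Proof.
  intros HK Hv. unfold mass. rewrite <- (proj1 (shift_iter_values K K v (le_n K))).
  apply fwd_iter_ge_shift; auto. lia.
Qed.

Lemma l1norm_diff_overlap k (p q : nat -> R) m :
  (forall i, (i <= S k)%nat -> 0 <= p i /\ 0 <= q i) -> m <= p 0%nat -> m <= q 0%nat ->
  l1norm (S k) (fun i => p i - q i) <= mass (S k) p + mass (S k) q - 2 * m.
Proof.
  intros Hpq Hp0 Hq0. unfold l1norm, mass. rewrite !(decomp_sum _ (S k)) by lia. simpl pred.
  assert (Hrest : sum_f_R0 (fun i => Rabs (p (S i) - q (S i))) k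
                  <= sum_f_R0 (fun i => p (S i)) k + sum_f_R0 (fun i => q (S i)) k).
  { rewrite <- sum_plus. apply sum_Rle. intros i Hi.
    destruct (Hpq (S i)) as [h1 h2]; [lia|]. apply Rabs_le. lra. }
  assert (Rabs (p 0%nat - q 0%nat) <= p 0%nat + q 0%nat - 2 * m) by (apply Rabs_le; lra).
  lra.
Qed.

Lemma jordan_decomposition K v : exists p q : nat -> R,
  (forall j, 0 <= p j /\ 0 <= q j) /\ (forall j, v j = p j - q j) /\
  l1norm K v = mass K p + mass K q.
Proof.
  exists (fun j => Rmax (v j) 0), (fun j => Rmax (- v j) 0). split; [|split].
  - intro j. split; apply Rmax_r.
  - intro j. unfold Rmax. destruct (Rle_dec (v j) 0), (Rle_dec (- v j) 0); lra.
  - unfold l1norm, mass. rewrite <- sum_plus. apply sum_eq. intros j _.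
    unfold Rmax, Rabs. destruct (Rle_dec (v j) 0), (Rle_dec (- v j) 0), (Rcase_abs (v j)); lra.
Qed.

(* Doeblin contraction: K events shrink the l1 norm of a mass-zero measure by 1 - b^K
   (couple its positive and negative parts through their common mass at state 0). *)
Lemma doeblin_contraction k v : mass (S k) v = 0 ->
  l1norm (S k) (fwd_iter (S k) (S k) v) <= (1 - b ^ S k) * l1norm (S k) v.
Proof.
  intro Hm. destruct (jordan_decomposition (S k) v) as (p & q & Hpq & Hv & Hnorm).
  assert (Hmpq : mass (S k) p = mass (S k) q).
  { assert (mass (S k) v = mass (S k) p - mass (S k) q).
    { unfold mass. rewrite <- minus_sum. apply sum_eq. intros. apply Hv. }
    lra. }
  assert (Hsplit : forall i, (i <= S k)%nat ->
            fwd_iter (S k) (S k) v i = fwd_iter (S k) (S k) p i - fwd_iter (S k) (S k) q i).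
  { intros i Hi. rewrite (fwd_iter_ext _ _ v (fun j => 1 * p j + (-1) * q j)) by
      (auto; intros; rewrite Hv; ring).
    rewrite fwd_iter_lin. ring. }
  unfold l1norm at 1.
  rewrite (sum_eq _ (fun i => Rabs (fwd_iter (S k) (S k) p i - fwd_iter (S k) (S k) q i)))
    by (intros; now rewrite Hsplit).
  eapply Rle_trans.
  - apply (l1norm_diff_overlap k _ _ (b ^ S k * mass (S k) p)).
    + intros. split; apply fwd_iter_nonneg; try lia; intros; apply Hpq.
    + apply minorization; [lia|intros; apply Hpq].
    + rewrite Hmpq. apply minorization; [lia|intros; apply Hpq].
  - rewrite !mass_fwd_iter, Hnorm, Hmpq. right. ring.
Qed.

Lemma doeblin_iterated k j v : mass (S k) v = 0 ->
  l1norm (S k) (fwd_iter (S k) (j * S k) v) <= (1 - b ^ S k) ^ j * l1norm (S k) v.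
Proof.
  intro Hm.
  assert (Hbk : b ^ S k <= 1) by (rewrite <- (pow1 (S k)); apply pow_incr; lra).
  induction j as [|j IH].
  - simpl pow. rewrite Rmult_1_l. apply Rle_refl.
  - change (S j * S k)%nat with (S k + j * S k)%nat. rewrite fwd_iter_add.
    change ((1 - b ^ S k) ^ S j) with ((1 - b ^ S k) * (1 - b ^ S k) ^ j).
    eapply Rle_trans.
    + apply doeblin_contraction. now rewrite mass_fwd_iter.
    + rewrite Rmult_assoc. apply Rmult_le_compat_l; [lra|exact IH].
Qed.

Lemma fwd_iter_vanish k v : 0 < b -> mass (S k) v = 0 ->
  forall e, 0 < e -> exists N, forall n, (N <= n)%nat -> l1norm (S k) (fwd_iter (S k) n v) <= e.
Proof.
  intros Hb_pos Hm e He.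
  assert (Hbk : 0 < b ^ S k <= 1).
  { split; [now apply pow_lt|]. rewrite <- (pow1 (S k)). apply pow_incr. lra. }
  assert (Hnv : 0 <= l1norm (S k) v) by (apply sum_nonneg; intros; apply Rabs_pos).
  destruct (pow_lt_1_zero (1 - b ^ S k)) with (e / (l1norm (S k) v + 1)) as [J HJ].
  { rewrite Rabs_pos_eq; lra. }
  { apply Rdiv_lt_0_compat; lra. }
  exists (J * S k)%nat. intros n Hn.
  replace n with ((n - J * S k) + J * S k)%nat by lia.
  eapply Rle_trans; [apply l1norm_fwd_iter_mono|].
  eapply Rle_trans; [apply doeblin_iterated; auto|].
  specialize (HJ J (le_n J)). rewrite Rabs_pos_eq in HJ by (apply pow_le; lra).
  apply Rle_trans with (e / (l1norm (S k) v + 1) * l1norm (S k) v).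
  - apply Rmult_le_compat_r; lra.
  - apply Rmult_le_reg_l with (l1norm (S k) v + 1); [lra|]. field_simplify; nra.
Qed.

End ForwardOperator.

(* The truncated geometric weights c rho^i on {0..K}; with c = 1/sum rho^i this is the
   stationary law pi_stat. *)
Definition geo (rho c : R) (K i : nat) : R := if (K <? i)%nat then 0 else c * rho ^ i.

Lemma geo_in rho c K i : (i <= K)%nat -> geo rho c K i = c * rho ^ i.
Proof. intro. unfold geo. now rewrite (proj2 (Nat.ltb_ge K i)) by lia. Qed.

Lemma geo_pos rho c K i : 0 < rho -> 0 < c -> (i <= K)%nat -> 0 < geo rho c K i.
Proof.
  intros. rewrite geo_in by auto. apply Rmult_lt_0_compat; auto. now apply pow_lt.
Qed.

Lemma geo_nonneg rho c K i : 0 < rho -> 0 < c -> 0 <= geo rho c K i.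
Proof.
  intros. unfold geo. destruct (K <? i)%nat; [lra|].
  apply Rmult_le_pos; [lra|]. apply pow_le; lra.
Qed.

Section Stationarity.
Variables a b rho : R.
Hypotheses (Hbal : a = b * rho) (Hab : a + b = 1).

(* Detailed balance a rho^i = b rho^(i+1) makes the geometric law invariant. *)
Lemma fwd_geo c K i : (1 <= K)%nat -> fwd a b K (geo rho c K) i = geo rho c K i.
Proof.
  intro HK. assert (Hb : b * rho + b = 1) by lra.
  unfold fwd, fwd_keep, fwd_depart, geo.
  destruct (K <? i)%nat eqn:E; [ring|]. apply Nat.ltb_ge in E.
  destruct i as [|j].
  - rewrite (proj2 (Nat.eqb_neq 0 K)), (proj2 (Nat.ltb_lt 0 K)), (proj2 (Nat.ltb_ge K 1)) by lia.
    simpl. subst a. transitivity (c * (b * rho + b)); [ring|]. rewrite Hb. ring.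
  - change (S j =? 0)%nat with false. replace (S j - 1)%nat with j by lia.
    rewrite (proj2 (Nat.ltb_ge K j)), Nat.ltb_irrefl by lia. subst a.
    destruct (S j =? K)%nat eqn:E2.
    + apply Nat.eqb_eq in E2. subst K. rewrite Nat.ltb_irrefl. simpl.
      transitivity (c * (rho * rho ^ j) * (b * rho + b)); [ring|]. rewrite Hb. ring.
    + apply Nat.eqb_neq in E2.
      rewrite (proj2 (Nat.ltb_lt (S j) K)), (proj2 (Nat.ltb_ge K (S (S j)))) by lia. simpl.
      transitivity (c * (rho * rho ^ j) * (b * rho + b)); [ring|]. rewrite Hb. ring.
Qed.

Lemma fwd_iter_geo c K n i : (1 <= K)%nat -> fwd_iter a b K n (geo rho c K) i = geo rho c K i.
Proof.
  intro HK. revert i. induction n; intro i; [reflexivity|].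
  rewrite fwd_iter_S, (fwd_ext _ _ _ _ (geo rho c K)) by auto. now apply fwd_geo.
Qed.

End Stationarity.

(* The Poisson equation of the queue-length chain for the centred observable
   y i = i - E_pi[Q], solved explicitly by summing the cumulated centred mass. *)
Definition geo_mean (rho c : R) (K : nat) : R := sum_f_R0 (fun i => INR i * geo rho c K i) K.
Definition centered (rho c : R) (K i : nat) : R := INR i - geo_mean rho c K.
Definition centered_cum (rho c : R) (K j : nat) : R :=
  sum_f_R0 (fun l => geo rho c K l * centered rho c K l) j.
Fixpoint poisson_sol (a rho c : R) (K n : nat) : R :=
  match n with
  | O => 0
  | S n => poisson_sol a rho c K n - centered_cum rho c K n / (a * geo rho c K n)
  end.

Section PoissonEquation.
Variables a b rho c : R.
Variable k : nat.
Hypotheses (Hbal : a = b * rho) (Hab : a + b = 1) (Ha : 0 < a) (Hb : 0 < b)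
  (Hrho : 0 < rho) (Hc : 0 < c) (Hnorm : sum_f_R0 (geo rho c (S k)) (S k) = 1).

Local Notation K := (S k).
Local Notation g := (poisson_sol a rho c (S k)).
Local Notation y := (centered rho c (S k)).
Local Notation pi := (geo rho c (S k)).

Lemma centered_cum_total : centered_cum rho c K K = 0.
Proof.
  unfold centered_cum, centered.
  rewrite (sum_eq _ (fun l => INR l * geo rho c K l + (- geo_mean rho c K) * geo rho c K l))
    by (intros; ring).
  rewrite sum_plus, sum_scal_l, Hnorm. unfold geo_mean. ring.
Qed.

Lemma bwd_poisson_sol i : (i <= K)%nat -> bwd a b K g i = g i - y i.
Proof.
  intro Hi.
  assert (Hp : forall j, (j <= K)%nat -> 0 < pi j) by (intros; now apply geo_pos).
  assert (Hbal_j : forall j, (S j <= K)%nat -> a * pi j = b * pi (S j)).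
  { intros j Hj. rewrite !geo_in by lia. rewrite Hbal. simpl. ring. }
  assert (Hcum : forall j, centered_cum rho c K (S j) = centered_cum rho c K j + pi (S j) * y (S j))
    by reflexivity.
  unfold bwd. destruct i as [|j].
  - rewrite Nat.min_l by lia.
    simpl. unfold centered_cum. simpl.
    assert (0 < pi 0%nat) by (apply Hp; lia). field. lra.
  - simpl pred. destruct (Nat.lt_ge_cases (S j) K) as [Hj|Hj].
    + rewrite Nat.min_l by lia. simpl poisson_sol. rewrite Hcum.
      assert (0 < pi j) by (apply Hp; lia). assert (0 < pi (S j)) by (apply Hp; lia).
      assert (Hnext : pi (S j) = a * pi j / b) by (rewrite Hbal_j by lia; field; lra).
      rewrite Hnext. replace b with (1 - a) by lra. field. repeat split; lra.
    + assert (j = k) by lia. subst j. rewrite Nat.min_r by lia. simpl poisson_sol.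
      assert (0 < pi k) by (apply Hp; lia). assert (0 < pi (S k)) by (apply Hp; lia).
      assert (HYK := centered_cum_total). rewrite Hcum in HYK.
      assert (Hy : y (S k) = - centered_cum rho c K k / pi (S k)) by (field_simplify_eq; lra).
      assert (Hnext : pi (S k) = a * pi k / b) by (rewrite Hbal_j by lia; field; lra).
      rewrite Hy, Hnext. replace b with (1 - a) by lra. field. repeat split; lra.
Qed.

Lemma dot_fwd_poisson v : dot K (fwd a b K v) g = dot K v g - dot K v y.
Proof.
  rewrite dot_fwd. unfold dot. rewrite <- minus_sum. apply sum_eq. intros.
  rewrite bwd_poisson_sol by auto. ring.
Qed.

Section AffineOrbit.
Variables (w : nat -> nat -> R) (r : nat -> R).
Hypotheses (Hw0 : forall i, (i <= K)%nat -> w O i = 0)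
  (HwS : forall n i, (i <= K)%nat -> w (S n) i = fwd a b K (w n) i + r i).

Lemma affine_orbit_increment n i : (i <= K)%nat -> w (S n) i = w n i + fwd_iter a b K n r i.
Proof.
  revert i. induction n as [|n IH]; intros i Hi.
  - rewrite HwS, Hw0 by auto.
    rewrite (fwd_ext _ _ _ _ (fun _ => 0 * r 0%nat + 0 * r 0%nat)).
    + rewrite fwd_lin. simpl. ring.
    + intros j Hj. rewrite Hw0 by auto. ring.
  - rewrite (HwS (S n)) by auto.
    rewrite (fwd_ext _ _ _ _ (fun j => 1 * w n j + 1 * fwd_iter a b K n r j)).
    + rewrite fwd_lin, (HwS n), fwd_iter_S by auto. ring.
    + intros j Hj. rewrite IH by auto. ring.
Qed.

(* Pairing the orbit with y telescopes through the Poisson equation. *)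
Lemma affine_orbit_pairing n : dot K (w n) y = dot K r g - dot K (fwd_iter a b K n r) g.
Proof.
  induction n as [|n IH].
  - change (fwd_iter a b K 0 r) with r. unfold dot at 1.
    rewrite sum_eq_R0 by (intros; rewrite Hw0 by lia; ring). ring.
  - rewrite (dot_ext K (w (S n)) (fun i => w n i + fwd_iter a b K n r i) y y)
      by (auto; intros; now apply affine_orbit_increment).
    unfold dot at 1. rewrite (sum_eq _ (fun i => w n i * y i + fwd_iter a b K n r i * y i))
      by (intros; ring).
    rewrite sum_plus. fold (dot K (w n) y) (dot K (fwd_iter a b K n r) y).
    rewrite IH, fwd_iter_S, dot_fwd_poisson. ring.
Qed.

(* Since the iterates of r converge to (mass r) pi, the pairing converges. *)
Lemma affine_orbit_limit e : 0 < e -> exists N, forall n, (N <= n)%nat ->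
  Rabs (dot K (w n) y - (dot K r g - mass K r * dot K pi g)) <= e.
Proof.
  intro He. set (m := mass K r). set (nu := fun j => 1 * r j + (- m) * pi j).
  assert (Hnu : mass K nu = 0).
  { unfold mass, nu. rewrite sum_plus, !sum_scal_l, Hnorm. fold (mass K r) m. ring. }
  assert (Hg : 0 <= l1norm K g) by (apply sum_nonneg; intros; apply Rabs_pos).
  destruct (fwd_iter_vanish a b ltac:(lra) ltac:(lra) Hab k nu Hb Hnu (e / (l1norm K g + 1)))
    as [N HN]; [apply Rdiv_lt_0_compat; lra|].
  exists N. intros n Hn. rewrite affine_orbit_pairing.
  assert (E : dot K (fwd_iter a b K n r) g - m * dot K pi g = dot K (fwd_iter a b K n nu) g).
  { unfold dot. rewrite <- sum_scal_l, <- minus_sum. apply sum_eq. intros i Hi.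
    unfold nu. rewrite fwd_iter_lin, fwd_iter_geo by (auto; lia). ring. }
  replace (dot K r g - dot K (fwd_iter a b K n r) g - (dot K r g - m * dot K pi g))
    with (- (dot K (fwd_iter a b K n r) g - m * dot K pi g)) by ring.
  rewrite E, Rabs_Ropp. eapply Rle_trans; [apply dot_bound|].
  apply Rle_trans with (e / (l1norm K g + 1) * l1norm K g).
  - apply Rmult_le_compat_r; auto.
  - apply Rmult_le_reg_l with (l1norm K g + 1); [lra|]. field_simplify; nra.
Qed.

End AffineOrbit.
End PoissonEquation.

Lemma summation_by_parts (p g : nat -> R) n :
  sum_f_R0 (fun i => p i * g i) n
  = g (S n) * sum_f_R0 p n - sum_f_R0 (fun j => (g (S j) - g j) * sum_f_R0 p j) n.
Proof.
  induction n as [|n IH]; simpl; [ring|]. rewrite IH. ring.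
Qed.

Section LimitValue.
Variables a b rho c : R.
Variable k : nat.
Hypotheses (Hbal : a = b * rho) (Ha : 0 < a) (Hrho : 0 < rho) (Hc : 0 < c)
  (Hnorm : sum_f_R0 (geo rho c (S k)) (S k) = 1).

Local Notation K := (S k).
Local Notation g := (poisson_sol a rho c (S k)).
Local Notation pi := (geo rho c (S k)).

(* For the departure rate r = fwd_depart b K pi (i.e. r i = b pi (i+1) = a pi i below K),
   the limit of affine_orbit_limit becomes a single explicit sum. *)
Lemma departure_limit_sum :
  dot K (fwd_depart b K pi) g - mass K (fwd_depart b K pi) * dot K pi g
  = pi K * sum_f_R0 (fun j => centered_cum rho c K j * sum_f_R0 pi j / pi j) k.
Proof.
  assert (Hp : forall j, (j <= K)%nat -> 0 < pi j) by (intros; now apply geo_pos).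
  assert (Hdep : forall i, (i <= k)%nat -> fwd_depart b K pi i = a * pi i).
  { intros i Hi. unfold fwd_depart.
    rewrite (proj2 (Nat.ltb_ge K i)), (proj2 (Nat.ltb_lt i K)) by lia.
    rewrite !geo_in, Hbal by lia. simpl. ring. }
  assert (HdepK : fwd_depart b K pi K = 0).
  { unfold fwd_depart. now rewrite !Nat.ltb_irrefl. }
  set (s := sum_f_R0 (fun i => pi i * g i) k).
  assert (Hcdf : sum_f_R0 pi k = 1 - pi K) by (rewrite tech5 in Hnorm; lra).
  assert (Edot : dot K (fwd_depart b K pi) g = a * s).
  { unfold dot. rewrite tech5, HdepK, Rmult_0_l, Rplus_0_r. unfold s. rewrite <- sum_scal_l.
    apply sum_eq. intros. rewrite Hdep by auto. ring. }
  assert (Emass : mass K (fwd_depart b K pi) = a * (1 - pi K)).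
  { unfold mass. rewrite tech5, HdepK, Rplus_0_r, <- Hcdf, <- sum_scal_l.
    apply sum_eq. intros. now rewrite Hdep. }
  assert (Epi : dot K pi g = s + pi K * g K) by (unfold dot; rewrite tech5; reflexivity).
  assert (Eparts := summation_by_parts pi g k). fold s in Eparts. rewrite Hcdf in Eparts.
  rewrite Edot, Emass, Epi.
  transitivity (a * pi K * (s - g K * (1 - pi K))); [ring|]. rewrite Eparts.
  transitivity (pi K * (- a * sum_f_R0 (fun j => (g (S j) - g j) * sum_f_R0 pi j) k)); [ring|].
  f_equal. rewrite <- sum_scal_l. apply sum_eq. intros j Hj. simpl poisson_sol.
  assert (0 < pi j) by (apply Hp; lia). field. lra.
Qed.
End LimitValue.

Definition psum0 (rho : R) (n : nat) : R := sum_f_R0 (fun j => rho ^ j) n.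
Definition psum1 (rho : R) (n : nat) : R := sum_f_R0 (fun j => INR j * rho ^ j) n.
Definition cross_sum (rho : R) (n : nat) : R :=
  sum_f_R0 (fun j => psum0 rho j * psum1 rho j / rho ^ j) n.
Definition square_sum (rho : R) (n : nat) : R :=
  sum_f_R0 (fun j => psum0 rho j * psum0 rho j / rho ^ j) n.

Lemma psum0_pos rho n : 0 < rho -> 0 < psum0 rho n.
Proof. intro. apply tech1. intros. now apply pow_lt. Qed.

Lemma geo_mean_psum1 rho c K : geo_mean rho c K = c * psum1 rho K.
Proof.
  unfold geo_mean, psum1. rewrite <- sum_scal_l. apply sum_eq. intros.
  rewrite geo_in by lia. ring.
Qed.

Lemma centered_cum_psum rho c K j : (j <= K)%nat ->
  centered_cum rho c K j = c * (psum1 rho j - geo_mean rho c K * psum0 rho j).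
Proof.
  intro. unfold centered_cum, centered, psum1, psum0.
  rewrite (sum_eq _ (fun l => c * (INR l * rho ^ l) + (- c * geo_mean rho c K) * rho ^ l)).
  - rewrite sum_plus, !sum_scal_l.
    change (sum_f_R0 (pow rho) j) with (sum_f_R0 (fun l => rho ^ l) j). ring.
  - intros. rewrite geo_in by lia. ring.
Qed.

Lemma departure_limit_psum rho c k : 0 < rho -> 0 < c ->
  geo rho c (S k) (S k)
    * sum_f_R0 (fun j => centered_cum rho c (S k) j * sum_f_R0 (geo rho c (S k)) j
                         / geo rho c (S k) j) k
  = c ^ 2 * rho ^ S k * (cross_sum rho k - geo_mean rho c (S k) * square_sum rho k).
Proof.
  intros Hr Hc. rewrite geo_in by lia. unfold cross_sum, square_sum.
  rewrite <- (sum_scal_l (geo_mean rho c (S k))), <- minus_sum, <- !sum_scal_l.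
  apply sum_eq. intros j Hj. rewrite centered_cum_psum, geo_in by lia.
  replace (sum_f_R0 (geo rho c (S k)) j) with (c * psum0 rho j).
  - assert (0 < rho ^ j) by (apply pow_lt; auto). field. split; lra.
  - unfold psum0. rewrite <- sum_scal_l. apply sum_eq. intros. rewrite geo_in by lia. ring.
Qed.

Definition psum1_closed (rho : R) (n : nat) : R :=
  (rho - INR (S n) * rho ^ S n + INR n * rho ^ S (S n)) / (1 - rho) ^ 2.

Lemma psum0_closed rho n : rho <> 1 -> psum0 rho n = (1 - rho ^ S n) / (1 - rho).
Proof. intro. unfold psum0. now apply tech3. Qed.

Lemma psum1_closed_eq rho n : rho <> 1 -> psum1 rho n = psum1_closed rho n.
Proof.
  intro H. assert (1 - rho <> 0) by lra. unfold psum1_closed, psum1. induction n.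
  - simpl. field. auto.
  - rewrite tech5, IHn, !S_INR. simpl pow. field. auto.
Qed.

Lemma square_sum_closed rho n : rho <> 1 -> 0 < rho -> square_sum rho n =
  ((1 / rho ^ n - rho) / (1 - rho) - 2 * rho * INR (S n)
   + rho ^ 2 * (1 - rho ^ S n) / (1 - rho)) / (1 - rho) ^ 2.
Proof.
  intros H Hr. assert (1 - rho <> 0) by lra. unfold square_sum. induction n.
  - simpl. rewrite psum0_closed by auto. simpl. field; lra.
  - rewrite tech5, IHn, psum0_closed, !S_INR by auto.
    assert (0 < rho ^ n) by (apply pow_lt; auto). simpl pow. field; repeat split; lra.
Qed.

Lemma cross_sum_closed rho n : rho <> 1 -> 0 < rho -> cross_sum rho n =
  ((rho / rho ^ n - rho ^ 2) / (1 - rho) - rho * (INR n + 1) * (INR n + 2) / 2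
   + rho ^ 2 * (INR n + 1) * INR n / 2 - (INR n + 1) * rho ^ 2
   + rho * psum1_closed rho (S n) - rho ^ 3 * psum1_closed rho n) / (1 - rho) ^ 3.
Proof.
  intros H Hr. assert (1 - rho <> 0) by lra. unfold cross_sum. induction n.
  - simpl. rewrite psum0_closed, psum1_closed_eq by auto. unfold psum1_closed. simpl. field; lra.
  - rewrite tech5, IHn, psum0_closed, psum1_closed_eq by auto. unfold psum1_closed.
    rewrite !S_INR. assert (0 < rho ^ n) by (apply pow_lt; auto). simpl pow.
    field; repeat split; lra.
Qed.

Lemma psum0_one n : psum0 1 n = INR n + 1.
Proof.
  unfold psum0. rewrite (sum_eq _ (fun _ => 1)) by (intros; apply pow1).
  rewrite sum_cte, S_INR. ring.
Qed.

Lemma psum1_one n : psum1 1 n = INR n * (INR n + 1) / 2.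
Proof. unfold psum1. induction n; [simpl; field|]. rewrite tech5, IHn, pow1, S_INR. field. Qed.

Lemma square_sum_one n : square_sum 1 n = (INR n + 1) * (INR n + 2) * (2 * INR n + 3) / 6.
Proof.
  unfold square_sum. induction n; [simpl; rewrite psum0_one; simpl; field|].
  rewrite tech5, IHn, psum0_one, pow1, S_INR. field.
Qed.

Lemma cross_sum_one n : cross_sum 1 n =
  ((INR n + 1) ^ 2 * (INR n + 2) ^ 2 / 4 - (INR n + 1) * (INR n + 2) * (2 * INR n + 3) / 6) / 2.
Proof.
  unfold cross_sum. induction n; [simpl; rewrite psum0_one, psum1_one; simpl; field|].
  rewrite tech5, IHn, psum0_one, psum1_one, pow1, S_INR. field.
Qed.

Lemma cov_limit_identity rho k : 0 < rho ->
  (/ psum0 rho (S k)) ^ 2 * rho ^ S k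
    * (cross_sum rho k - (/ psum0 rho (S k) * psum1 rho (S k)) * square_sum rho k)
  = cov_limit rho (S k).
Proof.
  intro Hr. unfold cov_limit. destruct (Req_EM_T rho 1) as [->|Hne].
  - rewrite cross_sum_one, square_sum_one, psum0_one, psum1_one, pow1, !S_INR. field.
    pose proof (pos_INR k). lra.
  - rewrite cross_sum_closed, square_sum_closed, psum0_closed, !psum1_closed_eq by auto.
    unfold psum1_closed. rewrite !S_INR. replace (S k + 2)%nat with (S (S (S k))) by lia.
    assert (0 < rho ^ k) by (apply pow_lt; auto).
    assert (rho ^ S (S k) <> 1).
    { intro Heq. destruct (Rlt_or_le rho 1) as [hl|hl].
      - assert (rho ^ k <= 1) by (rewrite <- (pow1 k); apply pow_incr; lra).
        simpl in Heq. nra.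
      - assert (1 < rho ^ S (S k)) by (apply Rlt_pow_R1; lra || lia). lra. }
    simpl pow in *. field. repeat split; lra.
Qed.

Lemma pi_stat_geo rho K i : 0 < rho -> pi_stat rho K i = geo rho (/ psum0 rho K) K i.
Proof.
  intro Hr. unfold pi_stat, geo. destruct (K <? i)%nat; [reflexivity|].
  destruct (Req_EM_T rho 1) as [->|Hne].
  - rewrite psum0_one, pow1, Rmult_1_r, S_INR. reflexivity.
  - rewrite psum0_closed, Rinv_div by auto. reflexivity.
Qed.

Lemma geo_normalized rho K : 0 < rho -> sum_f_R0 (geo rho (/ psum0 rho K) K) K = 1.
Proof.
  intro Hr. rewrite (sum_eq _ (fun i => / psum0 rho K * rho ^ i)) by (intros; now apply geo_in).
  rewrite sum_scal_l. change (sum_f_R0 (pow rho) K) with (psum0 rho K).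
  field. apply Rgt_not_eq, psum0_pos; auto.
Qed.

Section Model.
Variables lam mu : R.
Variable K : nat.
Hypotheses (Hlam : 0 < lam) (Hmu : 0 < mu) (HK : (1 <= K)%nat).

Local Notation a := (lam / (lam + mu)).
Local Notation b := (mu / (lam + mu)).
Local Notation rho := (lam / mu).
Local Notation pi := (geo (lam / mu) (/ psum0 (lam / mu) K) K).

Lemma uniformization_params : a = b * rho /\ a + b = 1 /\ 0 < a /\ 0 < b /\ 0 < rho.
Proof.
  repeat split; try (apply Rdiv_lt_0_compat; lra); field; lra.
Qed.

Lemma unif_succ n d i :
  unif lam mu K (S n) d i = fwd_keep a b K (unif lam mu K n d) i
    + match d with O => 0 | S d' => fwd_depart b K (unif lam mu K n d') i end.
Proof.
  simpl. unfold fwd_keep, fwd_depart.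
  destruct (K <? i)%nat; [destruct d; ring|]. destruct d; ring.
Qed.

Lemma unif_support_i n d i : (K < i)%nat -> unif lam mu K n d i = 0.
Proof.
  intro Hi. destruct n as [|n]; simpl.
  - unfold pi_stat. rewrite (proj2 (Nat.ltb_lt K i)) by lia. now destruct (d =? 0)%nat.
  - now rewrite (proj2 (Nat.ltb_lt K i)) by lia.
Qed.

Lemma unif_support_d n d i : (n < d)%nat -> unif lam mu K n d i = 0.
Proof.
  revert d i. induction n as [|n IH]; intros d i Hd.
  - simpl. destruct d; [lia|reflexivity].
  - rewrite unif_succ. unfold fwd_keep. rewrite !IH by lia.
    destruct d as [|d]; [lia|]. unfold fwd_depart. rewrite IH by lia.
    destruct (K <? i)%nat, (i =? 0)%nat, (i =? K)%nat, (i <? K)%nat; ring.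
Qed.

Lemma weighted_unif_succ (phi : nat -> R) n i :
  sum_f_R0 (fun d => phi d * unif lam mu K (S n) d i) (S n)
  = fwd_keep a b K (fun j => sum_f_R0 (fun d => phi d * unif lam mu K n d j) n) i
  + fwd_depart b K (fun j => sum_f_R0 (fun d => phi (S d) * unif lam mu K n d j) n) i.
Proof.
  rewrite <- fwd_keep_sum, <- fwd_depart_sum.
  rewrite (sum_eq _ (fun d => fwd_keep a b K (fun j => phi d * unif lam mu K n d j) i
      + match d with
        | O => 0
        | S d' => fwd_depart b K (fun j => phi d * unif lam mu K n d' j) i
        end)).
  2:{ intros d _. rewrite unif_succ. unfold fwd_keep, fwd_depart.
      destruct d, (K <? i)%nat, (i =? 0)%nat, (i =? K)%nat, (i <? K)%nat; ring. }
  rewrite sum_plus, tech5, (decomp_sum _ (S n)) by lia. simpl pred. rewrite Rplus_0_l.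
  replace (fwd_keep a b K (fun j => phi (S n) * unif lam mu K n (S n) j) i) with 0.
  - ring.
  - unfold fwd_keep. rewrite !unif_support_d by lia.
    destruct (K <? i)%nat, (i =? 0)%nat, (i =? K)%nat; ring.
Qed.

Lemma unif_nonneg n d i : 0 <= unif lam mu K n d i.
Proof.
  destruct uniformization_params as (_ & _ & Ha & Hb & Hr).
  revert d i. induction n as [|n IH]; intros d i.
  - simpl. destruct (d =? 0)%nat; [|lra]. rewrite pi_stat_geo by auto.
    apply geo_nonneg; auto. apply Rinv_0_lt_compat, psum0_pos; auto.
  - rewrite unif_succ. unfold fwd_keep, fwd_depart.
    pose proof (IH d (i - 1)%nat). pose proof (IH d K). pose proof (IH d 0%nat).
    destruct d as [|d]; [|pose proof (IH d (S i))];
    destruct (K <? i)%nat, (i =? 0)%nat, (i =? K)%nat; try destruct (i <? K)%nat; nra.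
Qed.

Lemma unif_marginal n i : sum_f_R0 (fun d => unif lam mu K n d i) n = pi i.
Proof.
  destruct uniformization_params as (Hbal & Hab & _ & _ & Hr).
  revert i. induction n as [|n IH]; intro i.
  - simpl. now apply pi_stat_geo.
  - rewrite (sum_eq _ (fun d => 1 * unif lam mu K (S n) d i)) by (intros; ring).
    rewrite (weighted_unif_succ (fun _ => 1)).
    transitivity (fwd a b K (fun j => sum_f_R0 (fun d => 1 * unif lam mu K n d j) n) i);
      [reflexivity|].
    rewrite (fwd_ext _ _ _ _ pi).
    + now apply fwd_geo.
    + intros j _. rewrite <- IH. apply sum_eq. intros; ring.
Qed.

Lemma unif_le_one n d i : unif lam mu K n d i <= 1.
Proof.
  destruct uniformization_params as (_ & _ & _ & _ & Hr).
  destruct (le_lt_dec i K) as [Hi|Hi]; [|rewrite unif_support_i by auto; lra].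
  destruct (le_lt_dec d n) as [Hd|Hd]; [|rewrite unif_support_d by auto; lra].
  apply Rle_trans with (pi i).
  - rewrite <- (unif_marginal n i).
    apply (term_le_sum (fun d => unif lam mu K n d i)); auto. intro; apply unif_nonneg.
  - rewrite <- (geo_normalized rho K Hr). apply (term_le_sum pi); auto.
    intro; apply geo_nonneg; auto. apply Rinv_0_lt_compat, psum0_pos; auto.
Qed.

Definition dep_moment (n i : nat) : R := sum_f_R0 (fun d => INR d * unif lam mu K n d i) n.

Lemma dep_moment_zero i : dep_moment 0 i = 0.
Proof. unfold dep_moment. simpl. ring. Qed.

Lemma dep_moment_succ n i :
  dep_moment (S n) i = fwd a b K (dep_moment n) i + fwd_depart b K pi i.
Proof.
  unfold dep_moment. rewrite weighted_unif_succ. unfold fwd. rewrite Rplus_assoc. f_equal.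
  unfold fwd_depart. destruct (K <? i)%nat, (i <? K)%nat; try ring.
  rewrite <- Rmult_plus_distr_l, <- (unif_marginal n (S i)), <- sum_plus. f_equal.
  apply sum_eq. intros. rewrite S_INR. ring.
Qed.

Lemma dep_moment_bounds n i : 0 <= dep_moment n i <= INR n * pi i.
Proof.
  split.
  - apply sum_nonneg. intros. apply Rmult_le_pos; [apply pos_INR|apply unif_nonneg].
  - rewrite <- (unif_marginal n i). unfold dep_moment. rewrite <- sum_scal_l.
    apply sum_Rle. intros d Hd.
    apply Rmult_le_compat_r; [apply unif_nonneg|now apply le_INR].
Qed.
End Model.

(* Poisson(s) probabilities: the number of uniformisation events by time t is Poisson
   with mean s = (lam + mu) t. *)
Definition poisson_wt (s : R) (n : nat) : R := exp (- s) * s ^ n / INR (fact n).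

Lemma exp_series s : infinite_sum (fun i => / INR (fact i) * s ^ i) (exp s).
Proof. unfold exp. destruct (exist_exp s) as [l H]. exact H. Qed.

Lemma poisson_wt_total s : infinite_sum (poisson_wt s) 1.
Proof.
  replace 1 with (exp (- s) * exp s) by (rewrite exp_Ropp; field; apply Rgt_not_eq, exp_pos).
  apply infinite_sum_ext with (fun n => exp (- s) * (/ INR (fact n) * s ^ n)).
  - intro. unfold poisson_wt. field. apply INR_fact_neq_0.
  - apply infinite_sum_scal, exp_series.
Qed.

Lemma poisson_wt_nonneg s n : 0 <= s -> 0 <= poisson_wt s n.
Proof.
  intro. unfold poisson_wt. apply Rmult_le_pos; [apply Rmult_le_pos|].
  - left; apply exp_pos.
  - now apply pow_le.
  - left; apply Rinv_0_lt_compat, INR_fact_lt_0.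
Qed.

Lemma poisson_wt_mean_partial s M :
  sum_f_R0 (fun n => INR n * poisson_wt s n) (S M) = s * sum_f_R0 (poisson_wt s) M.
Proof.
  induction M as [|M IH].
  - simpl. unfold poisson_wt. simpl. field.
  - rewrite tech5, IH, (tech5 (poisson_wt s)). unfold poisson_wt.
    rewrite !fact_simpl, !mult_INR.
    assert (INR (fact M) <> 0) by apply INR_fact_neq_0.
    assert (INR (S M) <> 0) by (apply not_0_INR; lia).
    assert (INR (S (S M)) <> 0) by (apply not_0_INR; lia).
    simpl pow. field. auto.
Qed.

Lemma poisson_wt_mean s : infinite_sum (fun n => INR n * poisson_wt s n) s.
Proof.
  apply infinite_sum_Un_cv. apply CV_shift with 1%nat.
  apply Un_cv_ext with (fun n => s * sum_f_R0 (poisson_wt s) n).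
  - intro n. rewrite Nat.add_1_r. symmetry. apply poisson_wt_mean_partial.
  - assert (H := CV_mult _ _ _ _ (Un_cv_const s)
                    (proj1 (infinite_sum_Un_cv _ _) (poisson_wt_total s))).
    now rewrite Rmult_1_r in H.
Qed.

Lemma exp_ge_term s N : 0 <= s -> s ^ N / INR (fact N) <= exp s.
Proof.
  intro Hs.
  assert (Hterm : forall i, 0 <= / INR (fact i) * s ^ i).
  { intro. apply Rmult_le_pos; [left; apply Rinv_0_lt_compat, INR_fact_lt_0|now apply pow_le]. }
  apply Rle_trans with (sum_f_R0 (fun i => / INR (fact i) * s ^ i) N).
  - replace (s ^ N / INR (fact N)) with (/ INR (fact N) * s ^ N) by (unfold Rdiv; ring).
    apply (term_le_sum (fun i => / INR (fact i) * s ^ i)); auto.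
  - apply sum_incr; auto. apply infinite_sum_Un_cv, exp_series.
Qed.

Lemma poisson_wt_small s n N : 1 <= s -> (n <= N)%nat ->
  poisson_wt s n <= INR (fact (S N)) / s.
Proof.
  intros Hs Hn. unfold poisson_wt.
  assert (Hexp := exp_ge_term s (S N) ltac:(lra)).
  assert (Hf := INR_fact_lt_0 (S N)). assert (He := exp_pos s).
  assert (Hsn : s ^ n <= s ^ N).
  { replace N with (n + (N - n))%nat by lia. rewrite pow_add.
    assert (1 <= s ^ (N - n)) by (apply pow_R1_Rle; auto).
    assert (0 <= s ^ n) by (apply pow_le; lra). nra. }
  assert (Hfn : 1 <= INR (fact n)) by (apply (le_INR 1), lt_O_fact).
  assert (Hq : s ^ n / INR (fact n) <= s ^ N).
  { apply Rle_trans with (s ^ n); auto. unfold Rdiv. rewrite <- (Rmult_1_r (s ^ n)) at 2.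
    apply Rmult_le_compat_l; [apply pow_le; lra|].
    rewrite <- Rinv_1. apply Rinv_le_contravar; lra. }
  simpl pow in Hexp. rewrite exp_Ropp.
  apply Rle_trans with (s ^ N / exp s).
  - replace (/ exp s * s ^ n / INR (fact n)) with (s ^ n / INR (fact n) * / exp s) by (field; lra).
    apply Rmult_le_compat_r; [left; now apply Rinv_0_lt_compat|exact Hq].
  - apply (Rmult_le_reg_r (exp s * s)); [nra|].
    replace (s ^ N / exp s * (exp s * s)) with (s * s ^ N) by (field; lra).
    replace (INR (fact (S N)) / s * (exp s * s)) with (INR (fact (S N)) * exp s) by (field; lra).
    apply (Rmult_le_reg_r (/ INR (fact (S N)))); [now apply Rinv_0_lt_compat|].
    replace (INR (fact (S N)) * exp s * / INR (fact (S N))) with (exp s) by (field; lra).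
    exact Hexp.
Qed.

Lemma poisson_wt_head s N : 1 <= s ->
  sum_f_R0 (poisson_wt s) N <= INR (S N) * INR (fact (S N)) / s.
Proof.
  intro Hs. apply Rle_trans with (sum_f_R0 (fun _ => INR (fact (S N)) / s) N).
  - apply sum_Rle. intros. now apply poisson_wt_small.
  - rewrite sum_cte. right. field. lra.
Qed.

Lemma poisson_average_bound (cn : nat -> R) L e C N s V : 0 <= e -> 1 <= s ->
  (forall n, (n <= N)%nat -> Rabs (cn n - L) <= C) ->
  (forall n, (N <= n)%nat -> Rabs (cn n - L) <= e) ->
  infinite_sum (fun n => poisson_wt s n * cn n) V ->
  Rabs (V - L) <= e + C * (INR (S N) * INR (fact (S N)) / s).
Proof.
  intros He Hs Hhead Htail HV.
  assert (HC : 0 <= C) by (eapply Rle_trans; [apply Rabs_pos|apply (Hhead 0%nat); lia]).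
  assert (Hwt : forall n, 0 <= poisson_wt s n) by (intro; apply poisson_wt_nonneg; lra).
  set (q := fun n => if le_lt_dec n N then C else 0).
  assert (Hq : forall n, Rabs (cn n - L) <= e + q n).
  { intro n. unfold q. destruct (le_lt_dec n N) as [Hn|Hn].
    - specialize (Hhead n Hn). lra.
    - rewrite Rplus_0_r. apply Htail. lia. }
  assert (HqN : forall M, sum_f_R0 (fun n => poisson_wt s n * q n) M
                          <= C * (INR (S N) * INR (fact (S N)) / s)).
  { assert (Hhd : sum_f_R0 (fun n => poisson_wt s n * q n) N
                  <= C * (INR (S N) * INR (fact (S N)) / s)).
    { rewrite (sum_eq _ (fun n => C * poisson_wt s n)), sum_scal_l.
      - apply Rmult_le_compat_l; auto. now apply poisson_wt_head.
      - intros n Hn. unfold q. destruct (le_lt_dec n N); [ring|lia]. }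
    assert (Hq0 : forall n, 0 <= poisson_wt s n * q n).
    { intro n. apply Rmult_le_pos; auto. unfold q. destruct (le_lt_dec n N); lra. }
    intro M. destruct (le_lt_dec M N).
    - eapply Rle_trans; [|apply Hhd]. now apply sum_prefix_le.
    - rewrite (sum_zero_tail _ N M); auto; [lia|].
      intros d Hd. unfold q. destruct (le_lt_dec d N); [lia|ring]. }
  assert (HW : forall M, sum_f_R0 (poisson_wt s) M <= 1).
  { intro M. apply sum_incr; auto. apply poisson_wt_total. }
  assert (HVL : infinite_sum (fun n => poisson_wt s n * (cn n - L)) (V - L * 1)).
  { apply infinite_sum_ext with (fun n => poisson_wt s n * cn n - L * poisson_wt s n).
    - intros; ring.
    - apply infinite_sum_minus; auto. apply infinite_sum_scal, poisson_wt_total. }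
  rewrite Rmult_1_r in HVL.
  apply Un_cv_abs_le with (sum_f_R0 (fun n => poisson_wt s n * (cn n - L))).
  - now apply infinite_sum_Un_cv.
  - intro M. eapply Rle_trans; [apply sum_f_R0_triangle|].
    apply Rle_trans with (sum_f_R0 (fun n => e * poisson_wt s n + poisson_wt s n * q n) M).
    + apply sum_Rle. intros n _. rewrite Rabs_mult, Rabs_pos_eq by auto.
      pose proof (Hwt n). specialize (Hq n). nra.
    + rewrite sum_plus, sum_scal_l. specialize (HW M). specialize (HqN M). nra.
Qed.

Lemma poisson_average_limit (cn : nat -> R) L :
  (forall e, 0 < e -> exists N, forall n, (N <= n)%nat -> Rabs (cn n - L) <= e) ->
  forall e, 0 < e -> exists s0, forall s V, s0 <= s ->
    infinite_sum (fun n => poisson_wt s n * cn n) V -> Rabs (V - L) < e.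
Proof.
  intros Hc e He. destruct (Hc (e / 2)) as [N HN]; [lra|].
  set (C := sum_f_R0 (fun n => Rabs (cn n - L)) N).
  assert (HC : forall n, (n <= N)%nat -> Rabs (cn n - L) <= C).
  { intros n Hn. apply (term_le_sum (fun n => Rabs (cn n - L))); auto. intros; apply Rabs_pos. }
  set (B := C * (INR (S N) * INR (fact (S N)))).
  assert (HB : 0 <= B).
  { apply Rmult_le_pos; [eapply Rle_trans; [apply Rabs_pos|apply (HC 0%nat); lia]|].
    apply Rmult_le_pos; apply pos_INR. }
  exists (Rmax 1 (4 * B / e + 1)). intros s V Hs HV.
  assert (Hs1 : 1 <= s) by (eapply Rle_trans; [apply Rmax_l|eauto]).
  assert (Hs2 : 4 * B / e + 1 <= s) by (eapply Rle_trans; [apply Rmax_r|eauto]).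
  assert (HBs : B / s <= e / 4).
  { apply (Rmult_le_reg_r s); [lra|]. replace (B / s * s) with B by (field; lra).
    assert (4 * B / e <= s - 1) by lra.
    apply (Rmult_le_compat_r (e / 4)) in H; [|lra].
    replace (4 * B / e * (e / 4)) with B in H by (field; lra). nra. }
  assert (Hbound := poisson_average_bound cn L (e / 2) C N s V ltac:(lra) Hs1 HC HN HV).
  replace (C * (INR (S N) * INR (fact (S N)) / s)) with (B / s) in Hbound by (unfold B; field; lra).
  lra.
Qed.

Section Covariance.
Variables lam mu : R.
Variable K : nat.
Hypotheses (Hlam : 0 < lam) (Hmu : 0 < mu) (HK : (1 <= K)%nat).
Variable t : R.
Hypothesis Ht : 0 <= t.

Local Notation s := ((lam + mu) * t).
Local Notation pi := (geo (lam / mu) (/ psum0 (lam / mu) K) K).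
Local Notation y := (centered (lam / mu) (/ psum0 (lam / mu) K) K).

Lemma joint_pmf_series d i :
  infinite_sum (fun n => poisson_wt s n * unif lam mu K n d i) (joint_pmf lam mu K t d i).
Proof.
  assert (Hs : 0 <= s) by nra.
  destruct (infinite_sum_comparison (fun n => poisson_wt s n * unif lam mu K n d i)
              (poisson_wt s) 1) as [J HJ].
  - intro n. pose proof (poisson_wt_nonneg s n ltac:(auto)).
    pose proof (unif_nonneg lam mu K Hlam Hmu n d i).
    pose proof (unif_le_one lam mu K Hlam Hmu HK n d i).
    split; nra.
  - apply poisson_wt_total.
  - unfold joint_pmf. replace (series_value _) with J; [exact HJ|].
    symmetry. now apply series_value_eq.
Qed.

Lemma E_Q_stationary : E_Q lam mu K t = geo_mean (lam / mu) (/ psum0 (lam / mu) K) K.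
Proof.
  assert (Hs : 0 <= s) by nra.
  unfold E_Q, geo_mean. apply sum_eq. intros i Hi. f_equal. apply series_value_eq.
  apply tonelli_triangular with (a := fun n d => poisson_wt s n * unif lam mu K n d i).
  - intros. apply Rmult_le_pos; [now apply poisson_wt_nonneg|apply unif_nonneg; auto].
  - intros. rewrite unif_support_d by auto. ring.
  - intro d. apply joint_pmf_series.
  - apply infinite_sum_ext with (fun n => pi i * poisson_wt s n).
    + intro n. rewrite sum_scal_l, unif_marginal by auto. ring.
    + pose proof (infinite_sum_scal _ _ (pi i) (poisson_wt_total s)) as Hsum.
      now rewrite Rmult_1_r in Hsum.
Qed.

Lemma departure_moment_series (psi : nat -> R) Cp :
  (forall i, (i <= K)%nat -> 0 <= psi i <= Cp) ->
  exists V, infinite_sum (fun n => poisson_wt s n * dot K (dep_moment lam mu K n) psi) V /\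
    infinite_sum (fun d => sum_f_R0 (fun i => INR d * psi i * joint_pmf lam mu K t d i) K) V.
Proof.
  intro Hpsi. assert (Hs : 0 <= s) by nra.
  assert (Hr : 0 < lam / mu) by (apply Rdiv_lt_0_compat; lra).
  assert (Hdot : forall n, 0 <= dot K (dep_moment lam mu K n) psi <= Cp * INR n).
  { intro n. split.
    - apply sum_nonneg. intros i Hi. apply Rmult_le_pos; [apply dep_moment_bounds|apply Hpsi]; auto.
    - apply Rle_trans with (sum_f_R0 (fun i => (Cp * INR n) * pi i) K).
      + apply sum_Rle. intros i Hi. destruct (Hpsi i Hi).
        destruct (dep_moment_bounds lam mu K Hlam Hmu HK n i).
        replace (Cp * INR n * pi i) with (INR n * pi i * Cp) by ring. now apply Rmult_le_compat.
      + rewrite sum_scal_l, geo_normalized by auto. lra. }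
  destruct (infinite_sum_comparison (fun n => poisson_wt s n * dot K (dep_moment lam mu K n) psi)
              (fun n => Cp * (INR n * poisson_wt s n)) (Cp * s)) as [V HV].
  - intro n. pose proof (poisson_wt_nonneg s n ltac:(auto)). specialize (Hdot n).
    split; [apply Rmult_le_pos; lra|nra].
  - apply infinite_sum_scal, poisson_wt_mean.
  - exists V. split; auto.
    apply tonelli_triangular with
      (a := fun n d =>
              sum_f_R0 (fun i => INR d * psi i * (poisson_wt s n * unif lam mu K n d i)) K).
    + intros n d. apply sum_nonneg. intros i Hi. destruct (Hpsi i Hi).
      apply Rmult_le_pos; [apply Rmult_le_pos; [apply pos_INR|lra]|].
      apply Rmult_le_pos; [now apply poisson_wt_nonneg|now apply unif_nonneg].
    + intros n d Hnd. apply sum_eq_R0. intros. rewrite unif_support_d by auto. ring.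
    + intro d. apply infinite_sum_finsum. intros i Hi. apply infinite_sum_scal, joint_pmf_series.
    + apply infinite_sum_ext
        with (fun n => poisson_wt s n * dot K (dep_moment lam mu K n) psi); auto.
      intro n. rewrite sum_swap. unfold dot. rewrite <- sum_scal_l. apply sum_eq. intros i Hi.
      unfold dep_moment.
      transitivity (poisson_wt s n * psi i * sum_f_R0 (fun d => INR d * unif lam mu K n d i) n);
        [ring|].
      rewrite <- sum_scal_l. apply sum_eq. intros. ring.
Qed.

Lemma cov_DQ_series :
  infinite_sum (fun n => poisson_wt s n * dot K (dep_moment lam mu K n) y) (cov_DQ lam mu K t).
Proof.
  destruct (departure_moment_series (fun _ => 1) 1) as [V1 [HV1 HD1]]; [intros; lra|].
  destruct (departure_moment_series INR (INR K)) as [V2 [HV2 HD2]].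
  { intros; split; [apply pos_INR|now apply le_INR]. }
  assert (E1 : E_D lam mu K t = V1).
  { unfold E_D. apply series_value_eq. eapply infinite_sum_ext; [|exact HD1].
    intro d. apply sum_eq. intros; ring. }
  assert (E2 : E_DQ lam mu K t = V2) by (unfold E_DQ; now apply series_value_eq).
  set (m := geo_mean (lam / mu) (/ psum0 (lam / mu) K) K).
  unfold cov_DQ. rewrite E1, E2, E_Q_stationary. fold m.
  replace (V2 - V1 * m) with (V2 - m * V1) by ring.
  eapply infinite_sum_ext; [|apply (infinite_sum_minus _ _ _ _ HV2 (infinite_sum_scal _ _ m HV1))].
  intro n. unfold dot, centered. fold m.
  rewrite (sum_eq (fun i => dep_moment lam mu K n i * (INR i - m))
             (fun i => dep_moment lam mu K n i * INR i - m * (dep_moment lam mu K n i * 1)))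
    by (intros; ring).
  rewrite minus_sum, sum_scal_l. ring.
Qed.
End Covariance.

Lemma embedded_covariance_limit lam mu k : 0 < lam -> 0 < mu ->
  forall e, 0 < e -> exists N, forall n, (N <= n)%nat ->
    Rabs (dot (S k) (dep_moment lam mu (S k) n)
                    (centered (lam / mu) (/ psum0 (lam / mu) (S k)) (S k))
          - cov_limit (lam / mu) (S k)) <= e.
Proof.
  intros Hl Hm e He.
  destruct (uniformization_params lam mu Hl Hm) as (Hbal & Hab & Ha & Hb & Hr).
  assert (Hc : 0 < / psum0 (lam / mu) (S k)) by (apply Rinv_0_lt_compat, psum0_pos; auto).
  assert (Hnorm := geo_normalized (lam / mu) (S k) Hr).
  destruct (affine_orbit_limit _ _ _ _ k Hbal Hab Ha Hb Hr Hc Hnorm (dep_moment lam mu (S k))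
    (fwd_depart (mu / (lam + mu)) (S k) (geo (lam / mu) (/ psum0 (lam / mu) (S k)) (S k))))
    with e as [N HN]; auto.
  - intros. apply dep_moment_zero.
  - intros. apply dep_moment_succ; auto. lia.
  - rewrite departure_limit_sum, departure_limit_psum, geo_mean_psum1, cov_limit_identity in HN;
      auto.
    now exists N.
Qed.

Theorem mainTheorem6 (lam mu : R) (K : nat) :
  0 < lam -> 0 < mu -> (1 <= K)%nat ->
  tends_at_infty (cov_DQ lam mu K) (cov_limit (lam / mu) K).
Proof.
  intros Hl Hm HK. destruct K as [|k]; [lia|].
  intros eps Heps.
  destruct (poisson_average_limit _ _ (embedded_covariance_limit lam mu k Hl Hm) eps Heps)
    as [s0 Hs0].
  exists (Rmax 0 (s0 / (lam + mu))). intros t Ht.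
  assert (Ht0 : 0 <= t) by (eapply Rle_trans; [apply Rmax_l|eauto]).
  assert (Ht1 : s0 / (lam + mu) <= t) by (eapply Rle_trans; [apply Rmax_r|eauto]).
  apply (Hs0 ((lam + mu) * t)).
  - apply (Rmult_le_compat_l (lam + mu)) in Ht1; [|lra].
    replace ((lam + mu) * (s0 / (lam + mu))) with s0 in Ht1 by (field; lra). lra.
  - apply cov_DQ_series; auto.
Qed.
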